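(* Let $S$ be an abelian semigroup (written additively, containing an identity element $0$), let $r \geq 1$, and let $A_1,\ldots,A_r, B$ be finite, nonempty subsets of $S$. Then there exists a polynomial $p(z_1,\ldots,z_r)$ such that \[ |B + h_1A_1 + \cdots + h_rA_r| = p(h_1,\ldots,h_r) \] for all nonnegative integers $h_1,\ldots,h_r$ with $\min(h_1,\ldots,h_r)$ sufficiently large.
   Context: For a nonempty subset $A$ of $S$ and a positive integer $h$, $hA$ denotes the set of all sums of $h$ not necessarily distinct elements of $A$, and $0A = \{0\}$. For nonempty subsets $A_1,\ldots,A_r,B$ of $S$ and nonnegative integers $h_1,\ldots,h_r$, $B + h_1A_1 + \cdots + h_rA_r$ denotes the set of all elements of $S$ of the form $b + u_1 + \cdots + u_r$ with $b \in B$ and $u_i \in h_iA_i$ for each $i$. $|X|$ denotes the cardinality of a set $X$. *)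

From HB Require Import structures.
From mathcomp Require Import all_boot all_order all_algebra.
From mathcomp Require Import finmap.
From mathcomp Require Export mpoly.
Set Implicit Arguments. Unset Strict Implicit. Unset Printing Implicit Defensive.
Import GRing.Theory.
Local Open Scope fset_scope.
Local Open Scope ring_scope.

(* A commutative (additively written) monoid = abelian semigroup with 0:
   MathComp's nmodType. Finite subsets are {fset S}. *)

Definition sumset (S : nmodType) (X Y : {fset S}) : {fset S} :=
  [fset x + y | x in X, y in Y].

Fixpoint hfold (S : nmodType) (h : nat) (A : {fset S}) : {fset S} :=
  match h with
  | 0%N => [fset (0 : S)]
  | h'.+1 => sumset A (hfold h' A)
  end.

Definition multisumset (S : nmodType) (r : nat) (B : {fset S})
  (A : 'I_r -> {fset S}) (h : 'I_r -> nat) : {fset S} :=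
  foldr (fun i X => sumset X (hfold (h i) (A i))) B (enum 'I_r).

From HB Require Import structures.
From mathcomp Require Import all_boot all_order all_algebra.
From mathcomp Require Import finmap.
From mathcomp Require Import mpoly.
From Stdlib Require Import Classical.

(* Write the elements of B, A_1, ..., A_r as one list of generators; an element of
   B + h_1 A_1 + ... + h_r A_r is then a linear combination whose exponent vector v has
   block sums (h_1, ..., h_r, 1). Call v redundant if a lexicographically smaller vector
   with the same block sums represents the same element. Adding a vector to both sides
   preserves the lexicographic order, the block sums and the value, so the redundant
   vectors form an upward closed set for the componentwise order, and by Dickson's lemma
   they are exactly the vectors lying above some element of a finite set G. Since every
   element has a unique lexicographically least representative, the cardinality is the
   number of vectors with block sums (h, 1) lying above no element of G. Removing one
   element g of G at a time, the vectors above g are g plus the vectors with block sums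
   shifted by those of g; by induction on G this count is a polynomial in h once all h_i
   are large, the base case being a product of binomial coefficients. *)

Set Implicit Arguments. Unset Strict Implicit. Unset Printing Implicit Defensive.
Import GRing.Theory Num.Theory.
Local Open Scope ring_scope.

Section ExponentVectors.
Local Open Scope nat_scope.
Implicit Types v w g ks d : seq nat.

Fixpoint addv v w : seq nat :=
  if (v, w) is (x :: v', y :: w') then (x + y) :: addv v' w' else [::].

Fixpoint subv v w : seq nat :=
  if (v, w) is (x :: v', y :: w') then (x - y) :: subv v' w' else [::].

Fixpoint lexlt v w : bool :=
  if (v, w) is (x :: v', y :: w') then (x < y) || (x == y) && lexlt v' w'
  else false.

Fixpoint block_sums ks v : seq nat :=
  if ks is k :: ks' then sumn (take k v) :: block_sums ks' (drop k v) else [::].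

Fixpoint compositions (k s : nat) : seq (seq nat) :=
  if k is k'.+1 then [seq t :: x | t <- iota 0 s.+1, x <- compositions k' (s - t)]
  else if s == 0 then [:: [::]] else [::].

Fixpoint block_compositions ks d : seq (seq nat) :=
  match ks, d with
  | [::], [::] => [:: [::]]
  | k :: ks', s :: d' =>
      [seq x ++ y | x <- compositions k s, y <- block_compositions ks' d']
  | _, _ => [::]
  end.

Lemma all2_leq_size v w : all2 leq v w -> size v = size w.
Proof. by elim: v w => [|x v IH] [|y w] //= /andP[_ /IH ->]. Qed.

Lemma all2_leq_refl v : all2 leq v v.
Proof. by elim: v => //= x v ->; rewrite leqnn. Qed.

Lemma all2_leq_trans u v w : all2 leq u v -> all2 leq v w -> all2 leq u w.
Proof.
elim: u v w => [|x u IH] [|y v] [|z w] //= /andP[xy uv] /andP[yz vw].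
by rewrite (leq_trans xy yz) (IH _ _ uv vw).
Qed.

Lemma size_addv v w : size v = size w -> size (addv v w) = size v.
Proof. by elim: v w => [|x v IH] [|y w] //= [/IH ->]. Qed.

Lemma size_subv v w : size v = size w -> size (subv v w) = size v.
Proof. by elim: v w => [|x v IH] [|y w] //= [/IH ->]. Qed.

Lemma subvKC g v : all2 leq g v -> addv g (subv v g) = v.
Proof. by elim: g v => [|x g IH] [|y v] //= /andP[/subnKC-> /IH ->]. Qed.

Lemma addKv g w : size g = size w -> subv (addv g w) g = w.
Proof. by elim: g w => [|x g IH] [|y w] //= [/IH ->]; rewrite addKn. Qed.

Lemma all2_leq_subLR g' g w : size g' = size g -> size g = size w ->
  all2 leq g' (addv g w) = all2 leq (subv g' g) w.
Proof.
by elim: g' g w => [|x g' IH] [|y g] [|z w] //= [e1] [e2]; rewrite IH // leq_subLR.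
Qed.

Lemma all2_leq_addr g w : size g = size w -> all2 leq g (addv g w).
Proof. by elim: g w => [|x g IH] [|y w] //= [/IH ->]; rewrite leq_addr. Qed.

Lemma take_addv k v w : take k (addv v w) = addv (take k v) (take k w).
Proof. by elim: k v w => [|k IH] [|x v] [|y w] //=; rewrite IH. Qed.

Lemma drop_addv k v w : drop k (addv v w) = addv (drop k v) (drop k w).
Proof. by elim: k v w => [|k IH] [|x v] [|y w] //=; case: (drop k v). Qed.

Lemma sumn_addv v w : size v = size w -> sumn (addv v w) = sumn v + sumn w.
Proof. by elim: v w => [|x v IH] [|y w] //= [/IH ->]; rewrite addnACA. Qed.

Lemma size_block_sums ks v : size (block_sums ks v) = size ks.
Proof. by elim: ks v => //= k ks IH v; rewrite IH. Qed.

Lemma block_sums_addv ks v w : size v = size w ->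
  block_sums ks (addv v w) = addv (block_sums ks v) (block_sums ks w).
Proof.
elim: ks v w => //= k ks IH v w e.
by rewrite take_addv drop_addv sumn_addv ?IH // ?size_take ?size_drop e.
Qed.

Lemma block_sums_subv ks g v : all2 leq g v ->
  block_sums ks (subv v g) = subv (block_sums ks v) (block_sums ks g).
Proof.
move=> gv; have sg : size g = size (subv v g) by rewrite size_subv (all2_leq_size gv).
by rewrite -{2}(subvKC gv) block_sums_addv // addKv // !size_block_sums.
Qed.

Lemma all2_leq_block_sums ks g v :
  all2 leq g v -> all2 leq (block_sums ks g) (block_sums ks v).
Proof.
move=> gv; have sg : size g = size (subv v g) by rewrite size_subv (all2_leq_size gv).
by rewrite -(subvKC gv) block_sums_addv // all2_leq_addr // !size_block_sums.
Qed.

Lemma lexltxx v : lexlt v v = false.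
Proof. by elim: v => //= x v ->; rewrite ltnn eqxx. Qed.

Lemma lexlt_trans u v w : lexlt u v -> lexlt v w -> lexlt u w.
Proof.
elim: u v w => [|x u IH] [|y v] [|z w] //=.
case/orP=> [xy|/andP[/eqP-> uv]]; case/orP=> [yz|/andP[/eqP<- vw]].
- by rewrite (ltn_trans xy yz).
- by rewrite xy.
- by rewrite yz.
- by rewrite eqxx (IH _ _ uv vw) orbT.
Qed.

Lemma lexlt_total v w : size v = size w -> v != w -> lexlt v w || lexlt w v.
Proof.
elim: v w => [|x v IH] [|y w] //= [e]; rewrite eqseq_cons negb_and.
by case: ltngtP => //= _; apply: IH.
Qed.

Lemma lexlt_add2r v w u : size v = size u -> size w = size u ->
  lexlt v w -> lexlt (addv v u) (addv w u).
Proof.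
elim: v w u => [|a v IH] [|b w] [|c u] //= [e1] [e2].
case/orP=> [ab|/andP[/eqP-> vw]]; first by rewrite ltn_add2r ab.
by rewrite eqxx IH // orbT.
Qed.

Lemma compositionsS k s :
  compositions k.+1 s = [seq t :: x | t <- iota 0 s.+1, x <- compositions k (s - t)].
Proof. by []. Qed.

Lemma mem_compositions k s v :
  (v \in compositions k s) = (size v == k) && (sumn v == s).
Proof.
elim: k s v => [|k IH] s v; first by case: s => [|s]; case: v.
rewrite compositionsS; apply/(@allpairsPdep _ (fun _ => seq nat))/idP.
  case=> t [x [+ + ->]]; rewrite mem_iota add0n ltnS IH /= eqSS.
  by move=> ts /andP[-> /eqP->]; rewrite subnKC // eqxx.
case: v => [|t x] // /andP[sx /eqP <-]; exists t, x.
by rewrite mem_iota IH addKn -eqSS sx eqxx /= ?add0n ltnS leq_addr.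
Qed.

Lemma uniq_compositions k s : uniq (compositions k s).
Proof.
elim: k s => [|k IH] s; first by case: s.
rewrite compositionsS; apply: (@allpairs_uniq_dep _ (fun _ => seq nat)).
- exact: iota_uniq.
- by [].
- by move=> [t1 x1] [t2 x2] _ _ [-> ->].
Qed.

Lemma sum_bin_diag s k : \sum_(t < s.+1) 'C(t + k, k) = 'C(s + k.+1, k.+1).
Proof.
elim: s => [|s IH]; first by rewrite big_ord1 !add0n !binn.
by rewrite big_ord_recr IH [in RHS]addSn binS -addSnnS.
Qed.

Lemma size_compositions k s : size (compositions k.+1 s) = 'C(s + k, k).
Proof.
have sizeS k' s' :
    size (compositions k'.+1 s') = \sum_(t < s'.+1) size (compositions k' t).
  rewrite compositionsS size_allpairs_dep sumnE big_map.
  rewrite -(big_mkord xpredT (size \o compositions k')) big_nat_rev /=.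
  by apply: eq_bigr => t _; rewrite add0n subSS.
elim: k s => [|k IH] s; rewrite sizeS.
  by rewrite bin0 big_ord_recl big1.
by rewrite -sum_bin_diag; apply: eq_bigr => t _; apply: IH.
Qed.

Lemma mem_block_compositions ks d v : size d = size ks ->
  (v \in block_compositions ks d) = (size v == sumn ks) && (block_sums ks v == d).
Proof.
elim: ks d v => [|k ks IH] [|s d] v //=; first by case: v.
move=> [e]; apply/allpairsP/idP.
  case=> [[x y] /= [+ + ->]]; rewrite mem_compositions IH //.
  case/andP=> /eqP kx /eqP <- /andP[/eqP sy /eqP <-].
  by rewrite size_cat kx sy take_size_cat // drop_size_cat // !eqxx.
case/andP=> /eqP sv /eqP [<- <-]; exists (take k v, drop k v).
rewrite mem_compositions IH ?size_block_sums // size_takel ?sv ?leq_addr //.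
by rewrite size_drop sv addKn cat_take_drop !eqxx.
Qed.

Lemma uniq_block_compositions ks d : uniq (block_compositions ks d).
Proof.
elim: ks d => [|k ks IH] [|s d] //=.
apply: allpairs_uniq => //; first exact: uniq_compositions.
move=> [x1 y1] [x2 y2] /allpairsP[[a1 b1] /= [h1 _ [-> ->]]].
move=> /allpairsP[[a2 b2] /= [h2 _ [-> ->]]] /= /eqP.
move: h1 h2; rewrite !mem_compositions => /andP[/eqP s1 _] /andP[/eqP s2 _].
by rewrite eqseq_cat ?s1 ?s2 // => /andP[/eqP-> /eqP->].
Qed.

Lemma size_block_compositions ks d : size ks = size d ->
  size (block_compositions ks d) =
  \prod_(p <- zip ks d) size (compositions p.1 p.2).
Proof.
elim: ks d => [|k ks IH] [|s d] //=; first by rewrite big_nil.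
by move=> [e]; rewrite size_allpairs big_cons IH.
Qed.

Lemma count_block_compositions_above ks d g (P : pred (seq nat)) :
  size g = sumn ks -> size d = size ks ->
  count (fun v => all2 leq g v && P v) (block_compositions ks d) =
  if all2 leq (block_sums ks g) d then
    count (P \o addv g) (block_compositions ks (subv d (block_sums ks g)))
  else 0.
Proof.
move=> sg sd; have sgd := size_block_sums ks g.
case: ifP => gd; last first.
  rewrite (@eq_in_count _ _ pred0) ?count_pred0 // => v.
  rewrite mem_block_compositions // => /andP[_ /eqP vd] /=.
  by apply/negP=> /andP[/(all2_leq_block_sums ks)]; rewrite vd gd.
have sd' : size (subv d (block_sums ks g)) = size ks by rewrite size_subv // sgd.
rewrite (@eq_count _ _ (predI P (all2 leq g))) => [|v]; last by rewrite /= andbC.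
rewrite -count_filter -(count_map (addv g) P); apply/permP/uniq_perm.
- exact/filter_uniq/uniq_block_compositions.
- rewrite map_inj_in_uniq ?uniq_block_compositions // => w1 w2.
  rewrite !mem_block_compositions // => /andP[/eqP s1 _] /andP[/eqP s2 _] e.
  by rewrite -(@addKv g w1) ?e ?addKv ?s1 ?s2.
move=> v; rewrite mem_filter; apply/idP/mapP.
  case/andP=> gv; rewrite mem_block_compositions // => /andP[/eqP sv /eqP vd].
  exists (subv v g); last by rewrite subvKC.
  by rewrite mem_block_compositions // size_subv ?sv // block_sums_subv // vd !eqxx.
case=> w; rewrite mem_block_compositions // => /andP[/eqP sw /eqP wd] ->.
rewrite all2_leq_addr ?sw // mem_block_compositions // size_addv ?sw // sg eqxx.
by rewrite block_sums_addv ?sw // wd subvKC ?eqxx.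
Qed.


Lemma count_split (T : Type) (P Q : pred T) s :
  count P s = count (fun x => Q x && P x) s + count (fun x => ~~ Q x && P x) s.
Proof. by elim: s => //= x s ->; case: (Q x); case: (P x); rewrite ?addnS. Qed.

Definition count_avoiding ks (G : seq (seq nat)) d :=
  count (fun v => ~~ has (all2 leq^~ v) G) (block_compositions ks d).

Lemma count_avoiding_cons ks g G d :
  size g = sumn ks -> {in G, forall g', size g' = sumn ks} -> size d = size ks ->
  count_avoiding ks (g :: G) d +
    (if all2 leq (block_sums ks g) d then
       count_avoiding ks [seq subv g' g | g' <- G] (subv d (block_sums ks g))
     else 0) = count_avoiding ks G d.
Proof.
move=> sg sG sd; rewrite /count_avoiding [RHS](count_split _ (all2 leq g)) addnC.
congr (_ + _); last by apply: eq_count => v /=; rewrite negb_or.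
rewrite count_block_compositions_above //; case: ifP => // gd.
apply: eq_in_count => w; rewrite mem_block_compositions; last first.
  by rewrite size_subv // size_block_sums.
case/andP=> /eqP sw _ /=; rewrite has_map; congr (~~ _).
by apply: eq_in_has => g' /sG sg' /=; rewrite all2_leq_subLR ?sg' ?sg ?sw.
Qed.

End ExponentVectors.

Section Dickson.
Local Open Scope nat_scope.

Definition upward_closed (U : seq nat -> Prop) :=
  forall v w, U v -> all2 leq v w -> U w.

Definition finite_basis n (U : seq nat -> Prop) (G : seq (seq nat)) :=
  (forall g, g \in G -> U g /\ size g = n) /\
  (forall v, size v = n -> U v -> has (all2 leq^~ v) G).

Variable U : seq nat -> Prop.
Hypothesis U_up : upward_closed U.

Lemma upward_closed_slice t : upward_closed (fun w => U (t :: w)).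
Proof. by move=> v w Uv vw; apply: U_up Uv _; rewrite /= leqnn. Qed.

Lemma upward_closed_proj : upward_closed (fun w => exists t, U (t :: w)).
Proof. by move=> v w [t Uv] vw; exists t; apply: upward_closed_slice Uv vw. Qed.

Lemma common_head (L : seq (seq nat)) :
  (forall g, g \in L -> exists t, U (t :: g)) ->
  exists T, forall g, g \in L -> U (T :: g).
Proof.
elim: L => [|g L IH] hL; first by exists 0.
have [t Ut] := hL g (mem_head _ _).
have [T UT] : exists T, forall g', g' \in L -> U (T :: g').
  by apply: IH => g' g'L; apply: hL; rewrite inE g'L orbT.
exists (maxn t T) => g'; rewrite inE => /predU1P[->|/UT UTg'].
  by apply: U_up Ut _; rewrite /= leq_maxl all2_leq_refl.
by apply: U_up UTg' _; rewrite /= leq_maxr all2_leq_refl.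
Qed.

Variable n : nat.
Hypothesis slice_basis : forall t, exists G, finite_basis n (fun w => U (t :: w)) G.

Lemma finite_basis_bounded_head T : exists G,
  (forall g, g \in G -> U g /\ size g = n.+1) /\
  (forall t w, t <= T -> size w = n -> U (t :: w) -> has (all2 leq^~ (t :: w)) G).
Proof.
have cons_basis t : exists G, (forall g, g \in G -> U g /\ size g = n.+1) /\
    (forall w, size w = n -> U (t :: w) -> has (all2 leq^~ (t :: w)) G).
  have [G [GU Gcover]] := slice_basis t; exists (map (cons t) G); split.
    by move=> _ /mapP[g /GU[Ug sg] ->]; rewrite /= sg.
  move=> w sw Uw; rewrite has_map; apply: sub_has (Gcover w sw Uw) => g /=.
  by rewrite leqnn.
elim: T => [|T [G [GU Gcover]]].
  have [G0 [G0U G0cover]] := cons_basis 0; exists G0; split => // t w.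
  by rewrite leqn0 => /eqP->; apply: G0cover.
have [G1 [G1U G1cover]] := cons_basis T.+1; exists (G ++ G1); split.
  by move=> g; rewrite mem_cat => /orP[/GU|/G1U].
move=> t w; rewrite leq_eqVlt ltnS has_cat => /orP[/eqP->|tT] sw Uw.
  by rewrite G1cover ?orbT.
by rewrite Gcover.
Qed.

Lemma finite_basis_cons :
  (exists G, finite_basis n (fun w => exists t, U (t :: w)) G) ->
  exists G, finite_basis n.+1 U G.
Proof.
(* Heads up to [T] are covered slice by slice; a vector with a larger head lies above
   [T :: g] for some basis element [g] of the projection, and [T] is chosen so that these
   all lie in [U]. *)
case=> Ginf [GinfU Ginfcover].
have [T UT] := common_head (fun g gG => (GinfU g gG).1).
have [G [GU Gcover]] := finite_basis_bounded_head T.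
exists G; split => // -[|t w] //= [sw] Uw.
have [tT|Tt] := leqP t T; first exact: Gcover.
have /hasP[g gGinf gw] := Ginfcover w sw (ex_intro _ t Uw).
have /hasP[g' g'G g'g] := Gcover T g (leqnn _) (GinfU g gGinf).2 (UT g gGinf).
by apply/hasP; exists g' => //; apply: all2_leq_trans g'g _; rewrite /= gw ltnW.
Qed.

End Dickson.

Lemma dickson n U : upward_closed U -> exists G, finite_basis n U G.
Proof.
elim: n U => [|n IH] U U_up.
  have [U0|nU0] := classic (U [::]).
    by exists [:: [::]]; split=> [g /[!inE] /eqP->|[]].
  by exists [::]; split=> // -[].
apply: (finite_basis_cons U_up) => [t|]; apply: IH.
  exact: upward_closed_slice.
exact: upward_closed_proj.
Qed.

Lemma exists_minimal (T : eqType) (lt : rel T) (s : seq T) x :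
  (forall x y z, lt x y -> lt y z -> lt x z) -> irreflexive lt -> x \in s ->
  exists2 m, m \in s & forall w, w \in s -> ~~ lt w m.
Proof.
move=> ltT ltxx; elim: s x => // y s IH x _.
have [[m ms mmin]|->] : (exists2 m, m \in s & forall w, w \in s -> ~~ lt w m) \/ s = [::].
- by case: s IH => [|z s] IH; [right | left; apply: (IH z); rewrite mem_head].
- have [ym|ym] := boolP (lt y m).
    exists y => [|w /predU1P[->|ws]]; rewrite ?mem_head ?ltxx //.
    by apply: contra (mmin w ws) => wy; apply: ltT wy ym.
  by exists m => [|w /predU1P[->|/mmin]] //; rewrite inE ms orbT.
- by exists y => [|w]; rewrite ?inE // => /eqP->; rewrite ltxx.
Qed.

Section EventuallyPolynomial.
Variable r : nat.
Implicit Types (phi psi : ('I_r -> nat) -> nat) (h e : 'I_r -> nat).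

Definition eventually (P : ('I_r -> nat) -> Prop) :=
  exists N, forall h, (forall i, N <= h i)%N -> P h.

Definition eventually_poly phi :=
  exists p : {mpoly rat[r]}, eventually (fun h => (phi h)%:R = p.@[fun i => (h i)%:R]).

Lemma eventually_and (P Q : ('I_r -> nat) -> Prop) :
  eventually P -> eventually Q -> eventually (fun h => P h /\ Q h).
Proof.
move=> [M PM] [N QN]; exists (maxn M N) => h hN.
by split; [apply: PM | apply: QN] => i; apply: leq_trans (hN i); rewrite ?leq_maxl ?leq_maxr.
Qed.

Lemma eventually_poly_eq phi psi :
  eventually (fun h => phi h = psi h) -> eventually_poly psi -> eventually_poly phi.
Proof.
move=> phi_psi [p psi_p]; exists p.
by have [N hN] := eventually_and phi_psi psi_p; exists N => h /hN [-> ->].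
Qed.

Lemma eventually_poly_cst c : eventually_poly (fun _ => c).
Proof. by exists c%:R%:MP, 0%N => h _; rewrite mevalC. Qed.

Lemma eventually_polyM phi psi :
  eventually_poly phi -> eventually_poly psi -> eventually_poly (fun h => phi h * psi h)%N.
Proof.
move=> [p phi_p] [q psi_q]; exists (p * q).
have [N hN] := eventually_and phi_p psi_q.
by exists N => h /hN [phiE psiE]; rewrite natrM mevalM phiE psiE.
Qed.

Lemma eventually_polyB phi psi chi : (forall h, phi h + chi h = psi h)%N ->
  eventually_poly psi -> eventually_poly chi -> eventually_poly phi.
Proof.
move=> phiE [p psi_p] [q chi_q]; exists (p - q).
have [N hN] := eventually_and psi_p chi_q.
by exists N => h /hN [psiE chiE]; rewrite mevalB -psiE -chiE -phiE natrD addrK.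
Qed.

Lemma eventually_poly_prod (I : Type) (s : seq I) (phi : I -> ('I_r -> nat) -> nat) :
  (forall x, eventually_poly (phi x)) ->
  eventually_poly (fun h => \prod_(x <- s) phi x h)%N.
Proof.
move=> phi_poly; elim: s => [|x s IH].
  by apply: eventually_poly_eq (eventually_poly_cst 1); exists 0%N => h _; rewrite big_nil.
apply: eventually_poly_eq (eventually_polyM (phi_poly x) IH).
by exists 0%N => h _; rewrite big_cons.
Qed.

Lemma ord_fun_bounded e : exists N, forall i, (e i <= N)%N.
Proof. by exists (\sum_i e i)%N => i; rewrite (bigD1 i) //= leq_addr. Qed.

Lemma eventually_poly_shift phi e :
  eventually_poly phi -> eventually_poly (fun h => phi (fun i => h i - e i))%N.
Proof.
move=> [p [N phi_p]]; have [M eM] := ord_fun_bounded e.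
exists (p \mPo [tuple 'X_i - (e i)%:R%:MP | i < r]), (N + M)%N => h hNM.
have e_h i : (e i <= h i)%N by apply: leq_trans (hNM i); rewrite (leq_trans (eM i)) ?leq_addl.
rewrite comp_mpoly_meval phi_p => [|i]; last first.
  by rewrite leq_subRL // addnC (leq_trans _ (hNM i)) // leq_add2l.
by apply: meval_eq => i; rewrite tnth_mktuple mevalB mevalXU mevalC natrB.
Qed.

Lemma bin_fact_prod x a : ('C(x + a, a) * a`! = \prod_(j < a) (x + j.+1))%N.
Proof.
elim: a => [|a IH]; first by rewrite big_ord0 bin0.
rewrite big_ord_recr /= -IH factS mulnCA mulnA -mul_bin_diag addnS /=.
by rewrite [RHS]mulnC mulnA.
Qed.

Lemma eventually_poly_bin (i : 'I_r) a : eventually_poly (fun h => 'C(h i + a, a)).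
Proof.
exists (\prod_(j < a) ('X_i + j.+1%:R%:MP) * (a`!%:R^-1)%:MP), 0%N => h _.
rewrite mevalM mevalC rmorph_prod /=.
have fact_neq0 : a`!%:R != 0 :> rat by rewrite pnatr_eq0 -lt0n fact_gt0.
apply: (mulIf fact_neq0); rewrite -mulrA mulVf // mulr1 -natrM bin_fact_prod natr_prod.
by apply: eq_bigr => j _; rewrite mevalD mevalXU mevalC natrD.
Qed.

End EventuallyPolynomial.

Section LinearCombinations.
Variable S : nmodType.
Implicit Types (gs : seq S) (v w : seq nat).

Fixpoint lincomb gs v : S :=
  if (gs, v) is (a :: gs', x :: v') then a *+ x + lincomb gs' v' else 0.

Lemma lincomb_cat gs1 gs2 v1 v2 : size gs1 = size v1 ->
  lincomb (gs1 ++ gs2) (v1 ++ v2) = lincomb gs1 v1 + lincomb gs2 v2.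
Proof.
elim: gs1 v1 => [|a gs1 IH] [|x v1] //=; first by rewrite add0r.
by move=> [e]; rewrite IH // addrA.
Qed.

Lemma lincomb_addv gs v w : size v = size w ->
  lincomb gs (addv v w) = lincomb gs v + lincomb gs w.
Proof.
elim: gs v w => [|a gs IH] [|x v] [|y w] //=; rewrite ?addr0 //.
by move=> [e]; rewrite IH // mulrnDr addrACA.
Qed.

Lemma lincomb_sumn0 gs v : sumn v = 0%N -> lincomb gs v = 0.
Proof.
elim: gs v => [|a gs IH] [|x v] //= /eqP; rewrite addn_eq0 => /andP[/eqP-> /eqP v0].
by rewrite mulr0n add0r IH.
Qed.

Lemma lincomb_incr_nth gs v j : size v = size gs -> (j < size gs)%N ->
  lincomb gs (incr_nth v j) = gs`_j + lincomb gs v.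
Proof.
elim: gs v j => [|a gs IH] [|x v] [|j] //= [e] lt_j_gs.
  by rewrite mulrS addrA.
by rewrite IH // addrCA.
Qed.

Lemma sumn_incr_nth v j : sumn (incr_nth v j) = (sumn v).+1.
Proof. by elim: v j => [|x v IH] [|j] //=; [elim: j | rewrite IH addnS]. Qed.

Lemma incr_nth_decomp v n : sumn v = n.+1 ->
  exists j w, [/\ (j < size v)%N, size w = size v, sumn w = n & v = incr_nth w j].
Proof.
elim: v n => [|[|x] v IH] n //=.
  rewrite add0n => /IH [j [w [lt_j_v sw sumw vE]]].
  by exists j.+1, (0%N :: w); split => //=; rewrite ?sw ?vE.
by move=> [vn]; exists 0%N, (x :: v).
Qed.

Lemma sumsetP (X Y : {fset S}) y :
  reflect (exists2 x, x \in X & exists2 z, z \in Y & y = x + z) (y \in sumset X Y).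
Proof. exact: imfset2P. Qed.

Lemma mem_hfold n (A : {fset S}) y : y \in hfold n A <->
  exists2 v, v \in compositions #|` A| n & y = lincomb (enum_fset A) v.
Proof.
set gs := enum_fset A; elim: n y => [|n IH] y /=.
  rewrite in_fset1; split => [/eqP->|[v]]; last first.
    by rewrite mem_compositions => /andP[_ /eqP v0] ->; rewrite lincomb_sumn0.
  exists (nseq (size gs) 0%N); last by rewrite lincomb_sumn0 //; elim: (size gs).
  by rewrite mem_compositions size_nseq eqxx; elim: (size gs).
split.
  case/sumsetP=> a aA [z /IH [v + ->] ->]; rewrite mem_compositions.
  move=> /andP[/eqP sv /eqP sumv]; have a_gs : (index a gs < size gs)%N by rewrite index_mem.
  exists (incr_nth v (index a gs)); last by rewrite lincomb_incr_nth // nth_index.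
  by rewrite mem_compositions size_incr_nth sv a_gs sumn_incr_nth sumv !eqxx.
case=> v; rewrite mem_compositions => /andP[/eqP sv /eqP sumv] ->.
have [j [w [lt_j_v sw sumw vE]]] := incr_nth_decomp sumv.
have lt_j_gs : (j < size gs)%N by rewrite -sv.
rewrite vE lincomb_incr_nth ?sw ?sv //; apply/sumsetP; exists gs`_j.
  exact: mem_nth.
exists (lincomb gs w) => //; apply/IH; exists w => //.
by rewrite mem_compositions sw sv sumw !eqxx.
Qed.

End LinearCombinations.

Section EnumVectors.
Variable r : nat.
Local Open Scope nat_scope.

Definition rcons_enum (f : 'I_r -> nat) (c : nat) : seq nat :=
  rcons [seq f i | i <- enum 'I_r] c.

Lemma size_rcons_enum f c : size (rcons_enum f c) = r.+1.
Proof. by rewrite size_rcons size_map size_enum_ord. Qed.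

Lemma all2_leq_rcons_enum e h c c' :
  all2 leq (rcons_enum e c) (rcons_enum h c') =
  all (fun i => e i <= h i) (enum 'I_r) && (c <= c').
Proof.
by rewrite /rcons_enum; elim: (enum 'I_r) => [|i s /= ->]; rewrite /= ?andbT ?andbA.
Qed.

Lemma subv_rcons_enum h e c c' :
  subv (rcons_enum h c) (rcons_enum e c') = rcons_enum (fun i => h i - e i) (c - c').
Proof. by rewrite /rcons_enum; elim: (enum 'I_r) => //= i s ->. Qed.

Lemma rcons_enum_nth v : size v = r.+1 ->
  v = rcons_enum (fun i => nth 0 v i) (nth 0 v r).
Proof.
move=> sv; rewrite /rcons_enum (map_comp (nth 0 v) val) val_enum_ord.
rewrite map_nth_iota0 ?sv // -cats1 -{1}(cat_take_drop r v) (drop_nth 0) ?sv //.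
by rewrite drop_oversize ?sv.
Qed.

End EnumVectors.

Section Multisumset.
Variables (S : nmodType) (r : nat) (A : 'I_r -> {fset S}) (B : {fset S}).
Variable h : 'I_r -> nat.

Definition generators (s : seq 'I_r) : seq S :=
  flatten [seq enum_fset (A i) | i <- s] ++ enum_fset B.

Lemma mem_foldr_sumset_hfold (s : seq 'I_r) y :
  y \in foldr (fun i X => sumset X (hfold (h i) (A i))) B s <->
  exists2 v, v \in block_compositions (rcons [seq #|` A i| | i <- s] #|` B|)
                                      (rcons [seq h i | i <- s] 1%N)
           & y = lincomb (generators s) v.
Proof.
elim: s y => [|i s IH] y.
  have B1 : (y \in B) = (y \in hfold 1 B).
    apply/idP/sumsetP => [yB|[x xB [z]]]; last first.
      by rewrite in_fset1 => /eqP-> ->; rewrite addr0.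
    by exists y => //; exists 0; rewrite ?in_fset1 ?addr0.
  have B1E : block_compositions [:: #|` B|] [:: 1%N] = compositions #|` B| 1.
    by rewrite /=; elim: (compositions _ _) => //= x L ->; rewrite cats0.
  change (y \in B <-> exists2 v, v \in block_compositions [:: #|` B|] [:: 1%N]
    & y = lincomb (enum_fset B) v).
  by rewrite B1 mem_hfold B1E.
split.
  case/sumsetP=> x /IH [u us ->] [z /mem_hfold [w wA ->] ->].
  exists (w ++ u); first by apply/allpairsP; exists (w, u).
  move: wA; rewrite mem_compositions => /andP[/eqP sw _].
  by rewrite /generators /= -catA lincomb_cat // addrC.
case=> v /allpairsP [[w u] /= [wA us ->] ->].
move: (wA); rewrite mem_compositions => /andP[/eqP sw _].
rewrite /generators /= -catA lincomb_cat ?sw //; apply/sumsetP.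
exists (lincomb (generators s) u); first by apply/IH; exists u.
by exists (lincomb (enum_fset (A i)) w); [apply/mem_hfold; exists w | rewrite addrC].
Qed.

Lemma mem_multisumset y : y \in multisumset B A h <->
  exists2 v, v \in block_compositions (rcons_enum (fun i => #|` A i|) #|` B|)
                                      (rcons_enum h 1%N)
           & y = lincomb (generators (enum 'I_r)) v.
Proof. exact: mem_foldr_sumset_hfold. Qed.

End Multisumset.

Section LexMinimalRepresentatives.
Variables (S : nmodType) (gs : seq S) (ks : seq nat).

Definition redundant (v : seq nat) := exists w,
  [/\ size w = size v, block_sums ks w = block_sums ks v,
      lincomb gs w = lincomb gs v & lexlt w v].

Lemma redundant_upward_closed : upward_closed redundant.
Proof.
move=> v x [w [sw bw lw ltwv]] vx; have sxv : size (subv x v) = size v.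
  by rewrite size_subv (all2_leq_size vx).
rewrite -(subvKC vx); exists (addv w (subv x v)); split.
- by rewrite !size_addv ?sw.
- by rewrite !block_sums_addv ?sw ?bw.
- by rewrite !lincomb_addv ?sw ?lw.
- by apply: lexlt_add2r; rewrite ?sw.
Qed.

Variables (G : seq (seq nat)) (d : seq nat).
Hypotheses (G_basis : finite_basis (sumn ks) redundant G) (sd : size d = size ks).

Let compositions_d := block_compositions ks d.
Let avoiding v := ~~ has (all2 leq^~ v) G.

Lemma redundant_not_avoiding v : v \in compositions_d -> redundant v -> ~~ avoiding v.
Proof.
by rewrite mem_block_compositions // negbK => /andP[/eqP sv _]; apply: G_basis.2.
Qed.

Lemma lincomb_inj_avoiding :
  {in [seq u <- compositions_d | avoiding u] &, injective (lincomb gs)}.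
Proof.
have size_d v : v \in compositions_d -> size v = sumn ks.
  by rewrite mem_block_compositions // => /andP[/eqP].
have not_lexlt v w : v \in compositions_d -> w \in compositions_d -> avoiding w ->
    lincomb gs v = lincomb gs w -> ~~ lexlt v w.
  move=> vd wd aw vw; apply: contraL aw => ltvw; apply: (redundant_not_avoiding wd).
  move: vd wd; rewrite !mem_block_compositions // => /andP[/eqP sv /eqP bv].
  by case/andP=> /eqP sw /eqP bw; exists v; rewrite sv sw bv bw.
move=> v w /[!mem_filter] /andP[av vd] /andP[aw wd] vw; apply/eqP/negPn/negP => neq_vw.
case/orP: (lexlt_total (etrans (size_d v vd) (esym (size_d w wd))) neq_vw); apply/negP.
  exact: not_lexlt.
exact: not_lexlt.
Qed.

Lemma exists_avoiding_representative v : v \in compositions_d ->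
  exists2 w, w \in [seq u <- compositions_d | avoiding u] & lincomb gs w = lincomb gs v.
Proof.
move=> vd; pose reps := [seq w <- compositions_d | lincomb gs w == lincomb gs v].
have v_reps : v \in reps by rewrite mem_filter eqxx vd.
have [w /[!mem_filter] /andP[/eqP wv wd] wmin] := exists_minimal lexlt_trans lexltxx v_reps.
exists w => //; rewrite mem_filter wd andbT; apply/hasPn => g gG; apply/negP => gw.
have [w' [sw' bw' lw' ltw'w]] := redundant_upward_closed (G_basis.1 g gG).1 gw.
have w'd : w' \in compositions_d.
  by move: wd; rewrite !mem_block_compositions // sw' bw'.
by have := wmin w'; rewrite mem_filter w'd lw' wv eqxx ltw'w => /(_ isT).
Qed.

Lemma card_lincomb_avoiding (M : {fset S}) :
  (forall y, y \in M <-> exists2 v, v \in compositions_d & y = lincomb gs v) ->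
  #|` M| = count_avoiding ks G d.
Proof.
move=> ME; rewrite /count_avoiding -size_filter -(size_map (lincomb gs)).
apply/perm_size/uniq_perm; first exact: fset_uniq.
  by rewrite (map_inj_in_uniq lincomb_inj_avoiding) filter_uniq ?uniq_block_compositions.
move=> y; apply/idP/mapP => [/ME[v vd ->]|[w wd ->]].
  by have [w wa wv] := exists_avoiding_representative vd; exists w.
by apply/ME; exists w => //; move: wd; rewrite mem_filter => /andP[].
Qed.

End LexMinimalRepresentatives.

Section CountAvoidingPolynomial.
Variables (r : nat) (k : 'I_r -> nat) (m : nat).
Local Notation ks := (rcons_enum k m).
Implicit Types h : 'I_r -> nat.

Lemma eventually_poly_size_compositions (i : 'I_r) a :
  eventually_poly (fun h => size (compositions a (h i))).
Proof.
case: a => [|a].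
  apply: eventually_poly_eq (eventually_poly_cst _ 0).
  by exists 1%N => h /(_ i); case: (h i).
apply: eventually_poly_eq (eventually_poly_bin i a).
by exists 0%N => h _; apply: size_compositions.
Qed.

Lemma eventually_poly_size_block_compositions c :
  eventually_poly (fun h => size (block_compositions ks (rcons_enum h c))).
Proof.
apply: eventually_poly_eq (eventually_polyM
  (eventually_poly_prod (enum 'I_r) (fun i => eventually_poly_size_compositions i (k i)))
  (eventually_poly_cst _ (size (compositions m c)))).
exists 0%N => h _; rewrite size_block_compositions ?size_rcons_enum //.
by rewrite zip_rcons ?size_map // big_rcons zip_map big_map.
Qed.

Lemma eventually_poly_count_avoiding G c : {in G, forall g, size g = sumn ks} ->
  eventually_poly (fun h => count_avoiding ks G (rcons_enum h c)).
Proof.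
move sizeG: (size G) => n; elim: n G sizeG c => [|n IHn] [|g G] //= => [_ c _|[sizeG] c sG].
  apply: eventually_poly_eq (eventually_poly_size_block_compositions c).
  by exists 0%N => h _; rewrite /count_avoiding /= count_predT.
have sg : size g = sumn ks by apply: sG; rewrite mem_head.
have {}sG : {in G, forall g', size g' = sumn ks}.
  by move=> g' g'G; apply: sG; rewrite inE g'G orbT.
have sd h : size (rcons_enum h c) = size ks by rewrite !size_rcons_enum.
apply: eventually_polyB (fun h => count_avoiding_cons sg sG (sd h)) (IHn G sizeG c sG) _.
set e := fun i : 'I_r => nth 0%N (block_sums ks g) i.
set cg := nth 0%N (block_sums ks g) r.
have gE : block_sums ks g = rcons_enum e cg.
  by apply: rcons_enum_nth; rewrite size_block_sums size_rcons_enum.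
have sG' : {in [seq subv g' g | g' <- G], forall g'', size g'' = sumn ks}.
  by move=> _ /mapP[g' /sG sg' ->]; rewrite size_subv ?sg' ?sg.
rewrite gE; have [le_cg_c|lt_c_cg] := leqP cg c.
  apply: eventually_poly_eq (eventually_poly_shift e (IHn _ (etrans (size_map _ _) sizeG) _ sG')).
  have [N eN] := ord_fun_bounded e; exists N => h hN.
  have e_le_h : all (fun i => e i <= h i)%N (enum 'I_r).
    by apply/allP => i _; apply: leq_trans (eN i) (hN i).
  by rewrite all2_leq_rcons_enum e_le_h le_cg_c subv_rcons_enum.
apply: eventually_poly_eq (eventually_poly_cst _ 0).
by exists 0%N => h _; rewrite all2_leq_rcons_enum leqNgt lt_c_cg andbF.
Qed.

End CountAvoidingPolynomial.

Theorem mainTheorem1 (S : nmodType) (r : nat) (hr : (0 < r)%N)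
  (A : 'I_r -> {fset S}) (B : {fset S})
  (hA : forall i, A i != fset0) (hB : B != fset0) :
  exists p : {mpoly rat[r]}, exists N : nat,
    forall h : 'I_r -> nat, (forall i, (N <= h i)%N) ->
      (#|` multisumset B A h|)%:R = p.@[fun i => (h i)%:R].
Proof.
pose gs := generators A B (enum 'I_r).
pose ks := rcons_enum (fun i => #|` A i|) #|` B|.
have [G G_basis] := dickson (sumn ks) (@redundant_upward_closed _ gs ks).
have sG : {in G, forall g, size g = sumn ks} by move=> g /G_basis.1[].
have [p [N count_p]] := eventually_poly_count_avoiding 1 sG.
exists p, N => h /count_p <-; congr _%:R.
apply: (card_lincomb_avoiding G_basis); first by rewrite !size_rcons_enum.
exact: mem_multisumset.
Qed.
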